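(* Let $G$ be a well-covered graph. Then every maximal induced bipartite subgraph of $G$ has the same weight, where the weight of a subgraph is twice its number of isolated vertices plus its number of non-isolated vertices.
   Context: All graphs are finite and simple; ''subgraph'' means induced subgraph, and a maximal bipartite subgraph is one maximal with respect to vertex inclusion among induced bipartite subgraphs. A graph is well-covered if every maximal independent set has the same cardinality. *)

From mathcomp Require Import all_boot.
Set Implicit Arguments. Unset Strict Implicit. Unset Printing Implicit Defensive.

Section Graphs.
Variable T : finType.
Variable e : rel T.

Definition simple_graph : Prop := symmetric e /\ irreflexive e.

Definition independent (S : {set T}) : bool :=
  [forall x in S, forall y in S, ~~ e x y].

Definition maximal_independent (S : {set T}) : bool :=
  maxset independent S.

Definition well_covered : Prop :=
  forall S1 S2 : {set T}, maximal_independent S1 -> maximal_independent S2 ->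
    #|S1| = #|S2|.

Definition induces_bipartite (S : {set T}) : bool :=
  [exists A : {set T}, (A \subset S) && independent A && independent (S :\: A)].

Definition maximal_bipartite (S : {set T}) : bool :=
  maxset induces_bipartite S.

Definition isolated_in (S : {set T}) : {set T} :=
  [set v in S | [forall u in S, ~~ e v u]].

Definition bip_weight (S : {set T}) : nat :=
  2 * #|isolated_in S| + #|S :\: isolated_in S|.

End Graphs.

(* Split a maximal bipartite S into independent parts A and S \ A and let I be
   the set of isolated vertices of G[S].  Maximality of S forces A ∪ I and
   (S \ A) ∪ I to be maximal independent sets, and the weight of S is exactly
   |A ∪ I| + |(S \ A) ∪ I|; in a well-covered graph both summands are the
   independence number. *)
From mathcomp Require Import all_boot.
From mathcomp Require Import zify.

Set Implicit Arguments. Unset Strict Implicit. Unset Printing Implicit Defensive.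

Section MaximalBipartite.
Variable T : finType.
Variable e : rel T.

Lemma independentP (S : {set T}) :
  reflect {in S &, forall x y, ~~ e x y} (independent e S).
Proof.
apply: (iffP forall_inP) => [indS x y xS yS | indS x xS].
- exact: (forall_inP (indS x xS)).
- by apply/forall_inP => y yS; apply: indS.
Qed.

Lemma independentS (B C : {set T}) :
  C \subset B -> independent e B -> independent e C.
Proof.
move=> /subsetP CB /independentP indB; apply/independentP => x y xC yC.
by apply: indB; apply: CB.
Qed.

Lemma isolated_inP (S : {set T}) v :
  reflect (v \in S /\ {in S, forall u, ~~ e v u}) (v \in isolated_in e S).
Proof.
rewrite inE; apply: (iffP andP) => [[vS /forall_inP] | [vS isov]] //.
by split=> //; apply/forall_inP.
Qed.

Lemma isolated_in_sub (S : {set T}) : isolated_in e S \subset S.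
Proof. by apply/subsetP => v /isolated_inP []. Qed.

Lemma induces_bipartiteU1 (S X : {set T}) v :
  X \subset S -> independent e (v |: X) -> independent e (S :\: X) ->
  induces_bipartite e (v |: S).
Proof.
move=> XS indvX indSX; apply/existsP; exists (v |: X).
rewrite setUS //= indvX /=; apply: independentS indSX.
by apply/subsetP => w; rewrite !inE; case: (w == v).
Qed.

Lemma bip_weight_cover (S X : {set T}) : X \subset S ->
  bip_weight e S = #|X :|: isolated_in e S| + #|(S :\: X) :|: isolated_in e S|.
Proof.
set I := isolated_in e S => XS; have IS : I \subset S := isolated_in_sub S.
have cardX := cardsUI X I; have cardSX := cardsUI (S :\: X) I.
have splitI := cardsID X I; have splitS := cardsID X S; have cardS := cardsID I S.
rewrite setIC in splitI; rewrite setIDAC (setIidPr IS) in cardSX.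
rewrite (setIidPr XS) in splitS; rewrite (setIidPr IS) in cardS.
rewrite /bip_weight -/I; lia.
Qed.

Hypothesis e_sym : symmetric e.

Lemma independentU_isolated (S X : {set T}) :
  X \subset S -> independent e X -> independent e (X :|: isolated_in e S).
Proof.
move=> /subsetP XS /independentP indX; apply/independentP => x y; rewrite !in_setU.
case/orP=> [xX | /isolated_inP[_ isox]].
  case/orP=> [yX | /isolated_inP[_ isoy]]; first exact: indX.
  by rewrite e_sym isoy ?XS.
by case/orP=> [/XS | /isolated_inP[+ _]]; apply: isox.
Qed.

Lemma maximal_independentU_isolated (S X : {set T}) :
  maximal_bipartite e S -> X \subset S -> independent e X ->
  independent e (S :\: X) -> maximal_independent e (X :|: isolated_in e S).
Proof.
move=> maxS XS indX indSX.
apply/maxsetP; split=> [|B indB MB]; first exact: independentU_isolated.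
apply/eqP; rewrite eqEsubset MB andbT; apply/subsetP => v vB.
have XB : X \subset B := subset_trans (subsetUl _ _) MB.
have vS : v \in S.
  (* otherwise S would extend to the bipartite v |: S with parts v |: X and S :\: X *)
  have indvX : independent e (v |: X).
    by apply: independentS indB; rewrite subUset sub1set vB.
  have := maxsetsup maxS (induces_bipartiteU1 XS indvX indSX) (subsetU1 v S).
  by move=> <-; rewrite setU11.
rewrite inE; have [// | vX /=] := boolP (v \in X).
apply/isolated_inP; split=> // u uS; apply/negP => evu.
have [uX | uX] := boolP (u \in X).
- by have := independentP _ indB v u vB (subsetP XB u uX); rewrite evu.
- by have := independentP _ indSX v u; rewrite !inE vX uX vS uS evu => /(_ isT isT).
Qed.

Lemma bip_weight_maximal_independent (S : {set T}) : maximal_bipartite e S ->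
  exists M1 M2, [/\ maximal_independent e M1, maximal_independent e M2
                  & bip_weight e S = #|M1| + #|M2|].
Proof.
move=> maxS; have /maxsetP[/existsP[A /andP[/andP[AS indA] indSA]] _] := maxS.
exists (A :|: isolated_in e S), ((S :\: A) :|: isolated_in e S).
split; last exact: bip_weight_cover.
- exact: maximal_independentU_isolated.
- apply: maximal_independentU_isolated => //; first exact: subsetDl.
  by rewrite setDDr setDv set0U (setIidPr AS).
Qed.

End MaximalBipartite.

Theorem mainTheorem6 (T : finType) (e : rel T) :
  simple_graph e -> well_covered e ->
  forall S1 S2 : {set T}, maximal_bipartite e S1 -> maximal_bipartite e S2 ->
    bip_weight e S1 = bip_weight e S2.
Proof.
move=> [e_sym _] wc S1 S2 maxS1 maxS2.
have [M1 [M2 [maxM1 maxM2 ->]]] := bip_weight_maximal_independent e_sym maxS1.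
have [N1 [N2 [maxN1 maxN2 ->]]] := bip_weight_maximal_independent e_sym maxS2.
by rewrite (wc _ _ maxM1 maxN1) (wc _ _ maxM2 maxN2).
Qed.
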